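(* Let $k\ge 2$ and let $G=G_n\langle t_1,\ldots,t_k\rangle$ be a Toeplitz graph with $n\ge t_{k-1}+t_k$. Then the following are equivalent: (i) $G$ is an interval graph; (ii) $G$ is chordal; (iii) $t_i=it_1$ for every $i\in[k]$; (iv) $\omega(G)=k+1$.
   Context: For integers $n\ge 2$, $k\ge 1$ and $1\le t_1<t_2<\cdots<t_k\le n-1$, the Toeplitz graph $G_n\langle t_1,\ldots,t_k\rangle$ is the simple graph with vertex set $[n]=\{1,\ldots,n\}$ in which two distinct vertices $i,j$ are adjacent if and only if $|i-j|\in\{t_1,\ldots,t_k\}$. A hole is an induced (chordless) cycle of length at least $4$; a graph is chordal if it has no hole. A graph is an interval graph if one can assign to each vertex $v$ a real interval $I_v$ such that distinct $u,v$ are adjacent iff $I_u\cap I_v\neq\emptyset$. $\omega(G)$ is the clique number. *)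

From Stdlib Require Import Reals.
From mathcomp Require Import all_boot.

Set Implicit Arguments. Unset Strict Implicit. Unset Printing Implicit Defensive.

Definition absdiff (a b : nat) : nat := (a - b) + (b - a).

(* Toeplitz graph G_n<t_1,...,t_k>: the parameters are t 1, ..., t k
   (the function t is 1-indexed; values outside [1,k] are irrelevant).
   Vertex set: 'I_n, the ordinal i standing for vertex i+1 of [n]
   (adjacency depends only on differences, so this is the same graph). *)
Definition toeplitz_adj (n k : nat) (t : nat -> nat) : rel 'I_n :=
  fun i j => (i != j) && [exists l : 'I_k, t l.+1 == absdiff i j].

Arguments toeplitz_adj : clear implicits.

(* A hole: an induced cycle v_0 v_1 ... v_{m-1} v_0 with m >= 4 distinct
   vertices, where (for a <> b) v_a v_b is an edge iff a,b are cyclically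
   consecutive. *)
Definition is_hole (T : finType) (adj : rel T) (s : seq T) : Prop :=
  match s with
  | [::] => False
  | x0 :: _ =>
    [/\ uniq s, 4 <= size s &
      forall a b, a < size s -> b < size s -> a != b ->
        adj (nth x0 s a) (nth x0 s b)
        = (b == a.+1 %% size s) || (a == b.+1 %% size s)]
  end.

Definition chordal (T : finType) (adj : rel T) : Prop :=
  ~ exists s : seq T, is_hole adj s.

(* A real interval: a convex subset of R (any kind of interval). *)
Definition real_interval (I : R -> Prop) : Prop :=
  forall x y z, I x -> I z -> Rle x y -> Rle y z -> I y.

Definition interval_graph (T : finType) (adj : rel T) : Prop :=
  exists I : T -> R -> Prop,
    (forall v, real_interval (I v)) /\
    (forall u v, u != v -> (adj u v <-> exists x, I u x /\ I v x)).

Definition is_clique (T : finType) (adj : rel T) (A : {set T}) : bool :=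
  [forall x in A, forall y in A, (x != y) ==> adj x y].

Definition clique_number (T : finType) (adj : rel T) : nat :=
  \max_(A : {set T} | is_clique adj A) #|A|.

From Stdlib Require Import Reals Lra.
From mathcomp Require Import all_boot zify.
Set Implicit Arguments. Unset Strict Implicit. Unset Printing Implicit Defensive.

(* Interval graphs are chordal: in an interval model of a hole v_0 ... v_(m-1)
   the disjoint intervals of v_0 and v_2 are bridged both by the interval of
   v_1 and by the chain of intervals of v_3, ..., v_(m-1), so the interval of
   v_1 meets one of the latter, a chord.
   If t is not arithmetic, let j be the first index with t j <> j * t 1; then
   t j - t 1 is not a parameter, and a 4-cycle 0, a, a + b, b (with a, b
   parameters but neither b - a nor a + b) can be chosen among the t i and
   their differences, except for k = 2 or k = 3 with t 3 = t 1 + t 2, where the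
   multiples of t 1 modulo t 1 + t 2 trace a longer hole.
   If t i = i * t 1, the vertex q * t 1 + r (r < t 1) gets the interval
   [N r + q, N r + q + k] for a large N.  A clique with least vertex v lies in
   v + {0, t 1, ..., t k}, so it has at most k + 1 vertices, and k + 1 only if
   all differences t j - t i are parameters, which forces t to be arithmetic. *)

Section HoleOfWalk.
Variables (T : finType) (adj : rel T).
Hypotheses (adj_sym : symmetric adj) (adj_irr : irreflexive adj).

Lemma hole_of_induced_path r (f : nat -> T) v :
  1 < r ->
  (forall i j, i < j <= r -> f i != f j) ->
  (forall i, i < r -> adj (f i) (f i.+1)) ->
  (forall i j, i.+1 < j <= r -> ~~ adj (f i) (f j)) ->
  (forall m, m <= r -> f m != v) ->
  adj v (f 0) -> adj v (f r) -> (forall m, 0 < m < r -> ~~ adj v (f m)) ->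
  is_hole adj (v :: mkseq f r.+1).
Proof.
move=> r2 f_inj step nochord fv v0 vr vint.
have sz : size (v :: mkseq f r.+1) = r.+2 by rewrite /= size_map size_iota.
have adj_lt a b : a < b -> b < r.+2 ->
    adj (nth v (v :: mkseq f r.+1) a) (nth v (v :: mkseq f r.+1) b) =
    (b == a.+1 %% r.+2) || (a == b.+1 %% r.+2).
  case: a b => [|a] [|b] // ab br.
    rewrite /= nth_mkseq // (modn_small (_ : 1 < r.+2)) //.
    case: (ltngtP b r) => H; last by rewrite H modnn vr orbT.
      by rewrite modn_small //=; case: b H {ab br} => [|b] H; [rewrite v0 | exact/negbTE/vint].
    lia.
  rewrite /= !nth_mkseq ?(modn_small (_ : a.+2 < r.+2)); try lia.
  have -> : (a.+1 == b.+2 %% r.+2) = false.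
    by case: (ltngtP b r) => H; [rewrite modn_small //; lia | lia | rewrite H modnn].
  rewrite orbF; case: (eqVneq b a.+1) => [->|H]; first by rewrite eqxx step //; lia.
  by rewrite eqSS (negPf H); apply/negbTE/nochord; lia.
split; rewrite ?sz; [|lia|].
- rewrite cons_uniq /mkseq andbC; apply/andP; split.
    rewrite map_inj_in_uniq ?iota_uniq // => i j.
    rewrite !mem_iota !add0n => /andP [_ ir] /andP [_ jr] e.
    by case: (ltngtP i j) => H //; [move: (f_inj i j) | move: (f_inj j i)];
      rewrite e eqxx; lia.
  apply/mapP => -[m]; rewrite mem_iota add0n => /andP [_ /fv fmv] vfm.
  by rewrite vfm eqxx in fmv.
- move=> a b ar br ab; case: (ltngtP a b) => H.
  + exact: adj_lt.
  + by rewrite adj_sym orbC adj_lt.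
  + by rewrite H eqxx in ab.
Qed.

(* A walk f 0, ..., f r whose endpoints are the only neighbours of v on it
   contains an induced path of length >= 2 with the same endpoints; closed
   up through v this is a hole. *)
Lemma hole_of_walk r (f : nat -> T) v :
  adj v (f 0) -> adj v (f r) -> ~~ adj (f 0) (f r) -> f 0 != f r ->
  (forall i, i < r -> adj (f i) (f i.+1)) ->
  (forall i, 0 < i < r -> (f i != v) && ~~ adj v (f i)) ->
  exists s, is_hole adj s.
Proof.
elim/ltn_ind: r f => r IH f v0 vr nadj0r ne0r step vint.
case: (boolP [exists i : 'I_r.+1, exists j : 'I_r.+1, (i.+1 < j) && adj (f i) (f j)]).
  case/existsP => -[i ir] /existsP [[j jr]] /= /andP [ij chord].
  have [c cE] : exists c, c = j - i.+1 by eexists.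
  pose g m := if m <= i then f m else f (m + c).
  have gr : g (r - c) = f r by rewrite /g ifN ?subnK //; lia.
  apply: (IH (r - c) _ g); rewrite ?gr //; try lia.
  - move=> m mr; rewrite /g /=; case: (ltngtP m i) => H.
    + by apply: step; lia.
    + by rewrite addSn; apply: step; lia.
    + by rewrite H (_ : i.+1 + c = j) //; lia.
  - by move=> m mr; rewrite /g; case: ifP => H; apply: vint; lia.
move=> /existsPn nochord.
have {}nochord i j : i.+1 < j <= r -> ~~ adj (f i) (f j).
  move=> /andP [ij jr]; have hi : i < r.+1 by lia. have hj : j < r.+1 by lia.
  by move: (nochord (Ordinal hi)) => /existsPn /(_ (Ordinal hj)); rewrite /= ij.
case: (boolP [exists i : 'I_r.+1, exists j : 'I_r.+1, (i < j) && (f i == f j)]).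
  case/existsP => -[i ir] /existsP [[j jr]] /= /andP [ij /eqP eqij].
  case: (ltnP j r) => jr'.
    by move: (nochord i j.+1); rewrite eqij step //; lia.
  have {jr jr'}jE : j = r by lia.
  subst j; have i0 : 0 < i by rewrite lt0n; apply: contraNneq ne0r => i0; rewrite -i0 eqij.
  apply: (IH i _ f) => //; rewrite ?eqij //.
  - by move=> m mi; apply: step; lia.
  - by move=> m mi; apply: vint; lia.
move=> /existsPn noeq.
have f_inj i j : i < j <= r -> f i != f j.
  move=> /andP [ij jr]; have hi : i < r.+1 by lia. have hj : j < r.+1 by lia.
  by move: (noeq (Ordinal hi)) => /existsPn /(_ (Ordinal hj)); rewrite /= ij.
have r2 : 1 < r.
  case: r {IH nochord noeq f_inj} vr nadj0r ne0r step vint => [|[|r]] //.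
  - by rewrite eqxx.
  - by move=> _ h _ st _; rewrite st in h.
exists (v :: mkseq f r.+1); apply: hole_of_induced_path => //.
- move=> m mr; case: (posnP m) => [->|m0].
    by apply: contraTneq v0 => ->; rewrite adj_irr.
  case: (ltngtP m r) => H; [by case/andP: (vint m ltac:(lia)) | lia |].
  by apply: contraTneq vr => <-; rewrite H adj_irr.
- by move=> m mr; case/andP: (vint m mr).
Qed.

End HoleOfWalk.

Definition between (a z b : R) : Prop :=
  (Rle a z /\ Rle z b) \/ (Rle b z /\ Rle z a).

Lemma interval_between (I : R -> Prop) a z b :
  real_interval I -> I a -> I b -> between a z b -> I z.
Proof. by move=> cvx Ia Ib [[? ?]|[? ?]]; [apply: (cvx a z b) | apply: (cvx b z a)]. Qed.

Lemma between_split a z b x : between a z b -> between a z x \/ between x z b.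
Proof.
rewrite /between => h.
by case: (Rle_dec a x); case: (Rle_dec z x); case: (Rle_dec a z);
  case: (Rle_dec b x); case: (Rle_dec z b); lra.
Qed.

Lemma interval_chain_cover (J : nat -> R -> Prop) lo L a b z :
  (forall j, real_interval (J j)) -> 0 < L ->
  J (lo + 1) a -> J (lo + L) b ->
  (forall j, lo < j < lo + L -> exists x, J j x /\ J j.+1 x) ->
  between a z b -> exists2 j, lo < j <= lo + L & J j z.
Proof.
move=> cvx; elim: L a b => [//|L IH] a b _ Ja Jb meet azb.
case: (posnP L) => [L0|L0].
  subst L; exists (lo + 1); first lia.
  by rewrite addn1 in Ja Jb *; apply: (interval_between (cvx _) Ja Jb).
have [x [Jx Jx']] : exists x, J (lo + L) x /\ J (lo + L).+1 x by apply: meet; lia.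
case: (between_split x azb) => h.
  have [j jL Jz] := IH a x L0 Ja Jx (fun j hj => meet j ltac:(lia)) h.
  by exists j => //; lia.
exists (lo + L.+1); first lia.
by rewrite addnS in Jb *; apply: (interval_between (cvx _) Jx' Jb h).
Qed.

Lemma disjoint_intervals_cross (I0 I2 : R -> Prop) p q x0 x2 :
  real_interval I0 -> real_interval I2 -> (forall x, I0 x -> I2 x -> False) ->
  I0 p -> I2 q -> I0 x0 -> I2 x2 ->
  exists z, between p z q /\ between x0 z x2.
Proof.
move=> c0 c2 disj p0 q2 x00 x22.
have sep0 a b c : I0 a -> I0 c -> I2 b -> ~ between a b c.
  by move=> Ia Ic Ib h; apply: (disj b (interval_between c0 Ia Ic h) Ib).
have sep2 a b c : I2 a -> I2 c -> I0 b -> ~ between a b c.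
  by move=> Ia Ic Ib h; apply: (disj b Ib (interval_between c2 Ia Ic h)).
rewrite /between in sep0 sep2 *.
have h1 := sep0 p q x0 p0 x00 q2; have h2 := sep2 x2 p q x22 q2 p0.
have h3 := sep0 p x2 x0 p0 x00 x22.
case: (Rle_dec p q) => pq; case: (Rle_dec p x0) => px0.
- by exists x0; lra.
- by exists p; lra.
- by exists p; lra.
- by exists x0; lra.
Qed.

Lemma interval_graph_chordal (T : finType) (adj : rel T) :
  interval_graph adj -> chordal adj.
Proof.
move=> [I [cvx Iadj]] [[|x0 s'] //].
set s := x0 :: s'; set m := size s.
move=> [s_uniq m4 hadj].
set w := nth x0 s.
have wne i j : i < m -> j < m -> i != j -> w i != w j by move=> *; rewrite nth_uniq.
have meet i j : i < m -> j < m -> i != j ->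
    (j == i.+1 %% m) || (i == j.+1 %% m) -> exists x, I (w i) x /\ I (w j) x.
  by move=> im jm ij; rewrite -hadj // => h; apply/(Iadj _ _ (wne i j im jm ij)).
have nomeet i j : i < m -> j < m -> i != j ->
    ~~ ((j == i.+1 %% m) || (i == j.+1 %% m)) -> ~ exists x, I (w i) x /\ I (w j) x.
  by move=> im jm ij; rewrite -hadj // => /negP h /(Iadj _ _ (wne i j im jm ij)).
have meet_next i : i.+1 < m -> exists x, I (w i) x /\ I (w i.+1) x.
  by move=> im; apply: meet; rewrite ?(modn_small im) ?eqxx //; lia.
have [p [p0 p1]] := meet_next 0 ltac:(lia).
have [q [q1 q2]] := meet_next 1 ltac:(lia).
have [a [a2 a3]] := meet_next 2 ltac:(lia).
have [b [bl b0]] : exists x, I (w m.-1) x /\ I (w 0) x.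
  by apply: meet; rewrite ?prednK ?modnn ?eqxx ?orbT //; lia.
have disj02 x : I (w 0) x -> I (w 2) x -> False.
  move=> h0 h2; apply: (nomeet 0 2); try lia; last by exists x.
  by rewrite !modn_small //; lia.
have [z [zpq zab]] := disjoint_intervals_cross (cvx _) (cvx _) disj02 p0 q2 b0 a2.
have z1 : I (w 1) z := interval_between (cvx _) p1 q1 zpq.
have [j jm Jz] : exists2 j, 2 < j <= 2 + (m - 3) & I (w j) z.
  apply: (interval_chain_cover (J := fun j => I (w j)) (fun j => cvx _) (a := a) (b := b)).
  - lia.
  - exact: a3.
  - by rewrite (_ : 2 + (m - 3) = m.-1) //; lia.
  - by move=> j hj; apply: meet_next; lia.
  - by move: zab; rewrite /between; lra.
apply: (nomeet 1 j); try lia; last by exists z.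
rewrite (modn_small (_ : 2 < m)); last lia.
by case: (ltngtP j.+1 m) => h; [rewrite modn_small | | rewrite h modnn]; lia.
Qed.

Definition param (k : nat) (t : nat -> nat) (x : nat) : bool :=
  [exists l : 'I_k, t l.+1 == x].

Lemma paramP k t x : reflect (exists2 i, 1 <= i <= k & t i = x) (param k t x).
Proof.
apply: (iffP existsP) => [[l /eqP <-]|[i ik <-]]; first by exists l.+1; rewrite ?ltn_ord.
have il : i.-1 < k by lia.
by exists (Ordinal il); rewrite /= prednK //; lia.
Qed.

Definition arithmetic (k : nat) (t : nat -> nat) : Prop :=
  forall i, 1 <= i <= k -> t i = i * t 1.

Section IncreasingParameters.
Variables (k : nat) (t : nat -> nat).
Hypothesis t_incr : forall i, 1 <= i -> i < k -> t i < t i.+1.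

Lemma t_lt i j : 1 <= i -> i < j -> j <= k -> t i < t j.
Proof.
move=> i1; elim: j => [//|j IH] ij jk.
case: (ltngtP i j) => h; [|lia|by rewrite h; apply: t_incr; lia].
by apply: ltn_trans (IH h (ltnW jk)) (t_incr _ _); lia.
Qed.

Lemma t_le i j : 1 <= i -> i <= j -> j <= k -> t i <= t j.
Proof. by move=> i1; rewrite leq_eqVlt => /predU1P [->|ij] jk; last exact/ltnW/t_lt. Qed.

Lemma t_lt_idx i j : 1 <= i <= k -> 1 <= j <= k -> t i < t j -> i < j.
Proof. by move=> ik jk; case: (ltnP i j) => // ji; have := t_le (i := j) (j := i); lia. Qed.

Lemma param_t i : 1 <= i <= k -> param k t (t i).
Proof. by move=> ik; apply/paramP; exists i. Qed.

Lemma param_ge x : param k t x -> t 1 <= x.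
Proof. by case/paramP => i ik <-; apply: t_le; lia. Qed.

Lemma param_le x : param k t x -> x <= t k.
Proof. by case/paramP => i ik <-; apply: t_le; lia. Qed.

Lemma param_le_pred j x : param k t x -> 1 <= j <= k -> x < t j -> x <= t j.-1.
Proof.
case/paramP => i ik <- jk itj.
have ij : i < j by apply: t_lt_idx; lia.
by apply: t_le; lia.
Qed.

Lemma nparam_gt x : t k < x -> ~~ param k t x.
Proof. by move=> kx; apply/negP => /param_le; lia. Qed.

Lemma nparam_lt x : x < t 1 -> ~~ param k t x.
Proof. by move=> x1; apply/negP => /param_ge; lia. Qed.

End IncreasingParameters.

Section MultiplesModulo.
Variables a b : nat.
Hypothesis ab : 0 < a < b.

Definition mult_mod m := (m.+1 * a) %% (a + b).

Lemma mult_mod_lt m : mult_mod m < a + b.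
Proof. by rewrite ltn_pmod //; lia. Qed.

Lemma mult_mod0 : mult_mod 0 = a.
Proof. by rewrite /mult_mod mul1n modn_small //; lia. Qed.

Lemma mult_modS m :
  mult_mod m.+1 = if mult_mod m + a < a + b then mult_mod m + a else mult_mod m - b.
Proof.
have -> : mult_mod m.+1 = (mult_mod m + a) %% (a + b) by rewrite /mult_mod modnDml mulSn addnC.
have := mult_mod_lt m; case: ifP => h hm; first by rewrite modn_small.
by rewrite (_ : mult_mod m + a = mult_mod m - b + (a + b)) ?modnDr ?modn_small //; lia.
Qed.

Lemma mult_mod_first_b : exists r,
  [/\ 0 < r, mult_mod r = b &
      forall m, 0 < m < r -> [&& mult_mod m != 0, mult_mod m != a & mult_mod m != b]].
Proof.
have hit : exists m, mult_mod m == b.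
  exists (a + b - 2); apply/eqP; rewrite /mult_mod.
  by rewrite (_ : _ * a = (a - 1) * (a + b) + b) ?modnMDl ?modn_small //; nia.
case: (ex_minnP hit) => r /eqP mm_r r_min.
have not_b m : m < r -> mult_mod m != b by move=> mr; apply: contraTneq mr => /eqP/r_min; lia.
have r0 : 0 < r by case: (posnP r) mm_r => // ->; rewrite mult_mod0; lia.
have not_0 m : 0 < m < r -> mult_mod m != 0.
  case: m => [//|m] mr; rewrite mult_modS.
  by have := not_b m ltac:(lia); have := mult_mod_lt m; case: ifP; lia.
exists r; split=> // m mr; rewrite not_0 // not_b 1?andbT; last lia.
case: m mr => [//|m] mr; rewrite mult_modS; have := mult_mod_lt m.
case: (posnP m) => [->|m0]; first by rewrite mult_mod0; case: ifP; lia.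
by have := not_0 m ltac:(lia); case: ifP; lia.
Qed.

End MultiplesModulo.

Section ToeplitzGraph.
Variables (n k : nat) (t : nat -> nat).
Local Notation G := (toeplitz_adj n k t).

Lemma toeplitz_sym : symmetric G.
Proof. by move=> u v; rewrite /toeplitz_adj eq_sym /absdiff addnC. Qed.

Lemma toeplitz_irr : irreflexive G.
Proof. by move=> u; rewrite /toeplitz_adj eqxx. Qed.

Lemma toeplitz_adjE (u v : 'I_n) :
  G u v = (nat_of_ord u != nat_of_ord v) && param k t (absdiff u v).
Proof. by []. Qed.

Lemma toeplitz_adj_lt (u v : 'I_n) :
  u < v -> G u v = param k t (v - u).
Proof. by move=> uv; rewrite toeplitz_adjE /absdiff (_ : _ + _ = v - u); [case: ltngtP uv|lia]. Qed.

Lemma toeplitz_adj_gt (u v : 'I_n) :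
  v < u -> G u v = param k t (u - v).
Proof. by move=> vu; rewrite toeplitz_sym toeplitz_adj_lt. Qed.

Lemma rhombus_hole a b : 0 < a < b -> a + b < n ->
  param k t a -> param k t b -> ~~ param k t (b - a) -> ~~ param k t (a + b) ->
  exists s, is_hole G s.
Proof.
move=> ab abn pa pb pba pab.
have n0 : 0 < n by lia.
have [o oE] : exists o : 'I_n, val o = 0 by exists (Ordinal n0).
pose f m : 'I_n := insubd o (if m == 0 then a else if m == 1 then a + b else b).
have fE m : val (f m) = if m == 0 then a else if m == 1 then a + b else b.
  by rewrite val_insubd ifT //; case: ifP => _; [|case: ifP => _]; lia.
have [f0 f1 f2] : [/\ val (f 0) = a, val (f 1) = a + b & val (f 2) = b] by rewrite !fE.
apply: (@hole_of_walk _ _ toeplitz_sym toeplitz_irr 2 f o).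
- by rewrite toeplitz_adj_lt f0 oE ?subn0 //; lia.
- by rewrite toeplitz_adj_lt f2 oE ?subn0 //; lia.
- by rewrite toeplitz_adj_lt f0 f2 //; lia.
- by apply/negP => /eqP /(congr1 val); rewrite f0 f2; lia.
- move=> [|[|i]] // _.
    by rewrite toeplitz_adj_lt f0 f1 ?addKn //; lia.
  by rewrite toeplitz_adj_gt f1 f2 ?addnK //; lia.
- move=> [|[|i]] // _; apply/andP; split.
    by apply/negP => /eqP /(congr1 val); rewrite f1 oE; lia.
  by rewrite toeplitz_adj_lt f1 oE ?subn0 //; lia.
Qed.

(* The multiples a, 2a, 3a, ... taken modulo a + b, up to the first visit of
   b, form a walk with steps +a and -b which avoids 0, a and b in between;
   together with vertex 0 it yields a hole. *)
Lemma cyclic_hole a b : 0 < a < b -> b != 2 * a -> a + b <= n ->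
  param k t a -> param k t b ->
  (forall x, 0 < x < a + b -> param k t x -> (x == a) || (x == b)) ->
  exists s, is_hole G s.
Proof.
move=> ab b2a abn pa pb only.
have n0 : 0 < n by lia.
have [o oE] : exists o : 'I_n, val o = 0 by exists (Ordinal n0).
pose f m : 'I_n := insubd o (mult_mod a b m).
have fE m : val (f m) = mult_mod a b m.
  by rewrite val_insubd ifT //; have := mult_mod_lt ab m; lia.
have [r [r0 mm_r mm_mid]] := mult_mod_first_b ab.
have mm_0 := mult_mod0 ab; have mm_S := mult_modS ab.
have adj0 (y : 'I_n) : 0 < y -> G o y = param k t y.
  by move=> y0; rewrite toeplitz_adj_lt oE ?subn0.
apply: (@hole_of_walk _ _ toeplitz_sym toeplitz_irr r f o).
- by rewrite adj0 fE ?mm_0 //; lia.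
- by rewrite adj0 fE ?mm_r //; lia.
- rewrite toeplitz_adj_lt !fE mm_0 mm_r; last lia.
  have := only (b - a) ltac:(lia).
  by case: (param k t (b - a)) => // /(_ isT) /orP [] /eqP; lia.
- by apply/negP => /eqP /(congr1 val); rewrite !fE mm_0 mm_r; lia.
- move=> i ir; have := mult_mod_lt ab i; have := mm_S i.
  case: ifP => wrap fS fi.
  + rewrite toeplitz_adj_lt !fE fS ?addKn //; lia.
  + rewrite toeplitz_adj_gt !fE fS; last lia.
    by rewrite (_ : _ - _ = b) //; lia.
- move=> i ir; have := mult_mod_lt ab i; case/and3P: (mm_mid i ir) => i0 ia ib ilt.
  rewrite adj0 fE; last lia.
  apply/andP; split; first by apply/negP => /eqP /(congr1 val); rewrite fE oE; lia.
  have := only (mult_mod a b i) ltac:(lia).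
  by case: (param k t _) => // /(_ isT) /orP [] /eqP; lia.
Qed.

End ToeplitzGraph.

Section FirstBadIndex.
Variables (n k : nat) (t : nat -> nat).
Hypotheses (k2 : 2 <= k) (t1_pos : 1 <= t 1).
Hypothesis t_incr : forall i, 1 <= i -> i < k -> t i < t i.+1.
Hypothesis tk_sum : t k.-1 + t k <= n.
Variable j : nat.
Hypotheses (j_range : 2 <= j <= k) (j_bad : t j != j * t 1).
Hypothesis j_min : forall i, 1 <= i < j -> t i = i * t 1.
Local Notation G := (toeplitz_adj n k t).
Local Notation P := (param k t).

Let t_lt := t_lt t_incr.
Let nparam_gt := nparam_gt t_incr.
Let nparam_lt := nparam_lt t_incr.

Lemma nparam_bad_diff : ~~ P (t j - t 1).
Proof.
apply/negP => /paramP [i ik ti].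
have t1j : t 1 < t j by apply: t_lt; lia.
have ij : i < j by apply: (t_lt_idx t_incr ik); lia.
have tj1 : t j.-1 = j.-1 * t 1 by apply: j_min; lia.
have := @j_min i ltac:(lia).
case: (ltngtP i.+1 j) => h; [|lia|].
- by have := @j_min i.+1 ltac:(lia); have := @t_lt i.+1 j ltac:(lia) h ltac:(lia); nia.
- by move: tj1 j_bad; rewrite -h /=; nia.
Qed.

(* For k = 2, and for k = 3 with t 3 = t 1 + t 2, no 4-cycle is available. *)
Lemma bad_index_cyclic_hole : k = 2 \/ k = 3 /\ t 3 = t 1 + t 2 -> exists s, is_hole G s.
Proof.
move=> hk.
have j2 : j = 2.
  case: hk => [|[k3 t3]]; first lia.
  case: (ltngtP j 3) => h; [lia|lia|].
  by move: j_bad; rewrite h t3 (@j_min 2) //; lia.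
subst j; have t12 : t 1 < t 2 by apply: t_lt; lia.
apply: (cyclic_hole (a := t 1) (b := t 2)) => //; try apply: (param_t t); try lia.
- by case: hk => [|[]] k3; move: tk_sum; rewrite k3 /=; lia.
- move=> x x12 /paramP [i ik ti]; subst x; apply/orP.
  case: hk => [k3|[k3 t3]]; rewrite k3 in ik.
    by case: (ltngtP i 2) => h; [left|lia|right]; apply/eqP; congr t; lia.
  case: (ltngtP i 2) => h; [left|exfalso|right]; try by apply/eqP; congr t; lia.
  by move: x12; rewrite (_ : i = 3) ?t3; lia.
Qed.

Lemma rhombus_t_hole a b : 1 <= a < b -> b <= k -> t a + t b < n ->
  ~~ P (t b - t a) -> t k < t a + t b -> exists s, is_hole G s.
Proof.
move=> ab bk abn nd kab.
have [t1a tab] : t 1 <= t a /\ t a < t b by split; [apply: (t_le t_incr) | apply: t_lt]; lia.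
apply: (@rhombus_hole n k t (t a) (t b)) => //; try lia.
- by apply: (param_t t); lia.
- by apply: (param_t t); lia.
- exact: nparam_gt.
Qed.

Lemma bad_index_low_hole : j < k.-1 -> exists s, is_hole G s.
Proof.
move=> jk.
have [t1j tjk1 tk1k] : [/\ t 1 < t j, t j < t k.-1 & t k.-1 < t k].
  by split; apply: t_lt; lia.
have nd := nparam_bad_diff.
case: (boolP (P (t k - t j))) => Pkj; last by apply: (@rhombus_t_hole j k); lia.
case: (boolP (P (t k - t 1))) => Pk1; last by apply: (@rhombus_t_hole 1 k); lia.
case: (ltngtP (t 1 + t j) (t k)) => sum.
- have : t k - t 1 <= t k.-1 by apply: (param_le_pred t_incr Pk1); lia.
  move=> k1; apply: (@rhombus_hole n k t (t k - t j) (t k - t 1)) => //; try lia.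
    by rewrite (_ : _ - _ = t j - t 1) //; lia.
  by apply: nparam_gt; lia.
- by apply: (@rhombus_t_hole 1 j); lia.
- apply: (@rhombus_t_hole j k.-1); rewrite ?nparam_lt; lia.
Qed.

Lemma bad_index_pred_hole : j = k.-1 -> ~ (k = 3 /\ t 3 = t 1 + t 2) ->
  exists s, is_hole G s.
Proof.
move=> jk not3; have nd := nparam_bad_diff.
have tj : t j = t k.-1 by rewrite jk.
have [t1j tjk] : t 1 < t j /\ t j < t k by split; apply: t_lt; lia.
case: (eqVneq (t 1 + t j) (t k)) => sum.
  have k4 : 4 <= k.
    case: (ltngtP k 3) => h; [lia|lia|].
    by case: not3; move: sum tj; rewrite h => <- ->.
  have t2 : t 2 = 2 * t 1 by apply: j_min; lia.
  have t2j : t 2 < t j by apply: t_lt; lia.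
  apply: (@rhombus_t_hole 2 k); try lia.
  by rewrite (_ : _ - _ = t j - t 1) //; lia.
apply: (@rhombus_hole n k t (t 1) (t j)); try lia.
- by apply: (param_t t); lia.
- by apply: (param_t t); lia.
- apply/negP => Psum; have := param_le t_incr Psum.
  by have := param_le_pred t_incr (j := k) Psum; lia.
Qed.

Lemma bad_index_hole : exists s, is_hole G s.
Proof.
case: (boolP ((k == 2) || (k == 3) && (t 3 == t 1 + t 2))) => [/orP hk|k_gen].
  apply: bad_index_cyclic_hole.
  by case: hk => [/eqP|/andP [/eqP k3 /eqP t3]]; [left|right].
case: (ltngtP j k.-1) => jk; first exact: bad_index_low_hole.
  have [tj t1k] : t j = t k /\ t 1 < t k.-1 by split; [congr t | apply: t_lt]; lia.
  by apply: (@rhombus_t_hole 1 j); rewrite ?nparam_bad_diff; lia.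
by apply: bad_index_pred_hole => // -[k3 t3]; move: k_gen; rewrite k3 t3 /= eqxx.
Qed.

End FirstBadIndex.

Lemma chordal_arithmetic n k t : 2 <= k -> 1 <= t 1 ->
  (forall i, 1 <= i -> i < k -> t i < t i.+1) -> t k.-1 + t k <= n ->
  chordal (toeplitz_adj n k t) -> arithmetic k t.
Proof.
move=> k2 t1 t_incr tk_sum chord i ik.
case: (eqVneq (t i) (i * t 1)) => // bad_i; case: chord.
have bad : exists i, (1 <= i <= k) && (t i != i * t 1) by exists i; rewrite ik.
case: (ex_minnP bad) => j /andP [jk bad_j] j_min.
have j2 : 2 <= j by case: j jk bad_j {j_min} => [|[|j]] //; rewrite mul1n eqxx.
apply: (bad_index_hole k2 t1 t_incr tk_sum (j := j)) => //; first lia.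
move=> l lj; case: (eqVneq (t l) (l * t 1)) => // bad_l.
by have := j_min l; rewrite bad_l andbT; lia.
Qed.

Section ArithmeticIntervalModel.
Variables (n k : nat) (t : nat -> nat).
Hypotheses (t1_pos : 1 <= t 1) (t_arith : arithmetic k t).
Local Notation d := (t 1).

(* Residue classes modulo d are placed n + k + 1 apart, so that intervals of
   different classes never meet. *)
Definition coord (v : nat) := (n + k + 1) * (v %% d) + v %/ d.

Lemma param_arith x : param k t x = [exists i : 'I_k, x == i.+1 * d].
Proof.
apply/existsP/existsP => -[i /eqP e]; exists i; apply/eqP; have := ltn_ord i.
  by move=> ik; rewrite -e t_arith.
by move=> ik; rewrite e t_arith //; lia.
Qed.

Lemma coord_gap u v : u < n -> u %% d < v %% d -> coord u + k < coord v.
Proof.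
rewrite /coord; have := leq_div u d.
move: (u %/ d) (v %/ d) (u %% d) (v %% d) => qu qv ru rv qu_le un ruv.
have : (n + k + 1) * ru.+1 <= (n + k + 1) * rv by rewrite leq_mul2l ruv orbT.
rewrite mulnS; lia.
Qed.

Lemma param_coord (u v : nat) : u < v < n ->
  param k t (v - u) = (coord v <= coord u + k) && (coord u <= coord v + k).
Proof.
move=> uvn; have d0 : 0 < d by [].
rewrite param_arith; apply/existsP/idP => [[i /eqP e]|/andP [h1 h2]].
  have vE : v = i.+1 * d + u by lia.
  rewrite /coord vE modnMDl divnMDl //; have := ltn_ord i; lia.
have ruv : v %% d = u %% d.
  case: (ltngtP (v %% d) (u %% d)) => // h.
    by have := coord_gap (v := u) (_ : v < n) h; lia.
  by have := coord_gap (_ : u < n) h; lia.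
move: h1 h2; rewrite /coord ruv => h1 h2.
have quv : u %/ d < v %/ d.
  rewrite ltnNge; apply/negP => h.
  have : v %/ d * d <= u %/ d * d by rewrite leq_mul2r h orbT.
  by have := divn_eq u d; have := divn_eq v d; rewrite ruv; lia.
have hi : (v %/ d - u %/ d).-1 < k by lia.
exists (Ordinal hi); apply/eqP => /=; rewrite prednK ?subn_gt0 // mulnBl.
by have := divn_eq u d; have := divn_eq v d; rewrite ruv; lia.
Qed.

Lemma arithmetic_interval_graph : interval_graph (toeplitz_adj n k t).
Proof.
exists (fun (v : 'I_n) x => Rle (INR (coord v)) x /\ Rle x (INR (coord v + k))).
split=> [v x y z [? ?] [? ?] ? ?|u v uv]; first by split; lra.
have -> : (exists x, (Rle (INR (coord u)) x /\ Rle x (INR (coord u + k))) /\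
                     (Rle (INR (coord v)) x /\ Rle x (INR (coord v + k))))
          <-> (coord u <= coord v + k) && (coord v <= coord u + k).
  split=> [[x [[? ?] [? ?]]]|/andP [? ?]].
    by apply/andP; split; apply/leP/INR_le; lra.
  by exists (INR (maxn (coord u) (coord v))); split; split; apply/le_INR/leP; lia.
case: (ltngtP u v) => h.
- by rewrite toeplitz_adj_lt // param_coord 1?andbC //; apply/andP; split.
- by rewrite toeplitz_adj_gt // param_coord //; apply/andP; split.
- by move: uv; rewrite (val_inj h) eqxx.
Qed.

End ArithmeticIntervalModel.

(* If all differences t j - t i are parameters, the j - 1 increasing values
   t j - t (j - e), e = 1, ..., j - 1, are parameters, so the e-th is at least
   t e; for e = j - 1 this gives t j - t 1 >= t (j - 1), and t j - t 1 < t j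
   forces equality. *)
Lemma arithmetic_of_diffs k t : 1 <= t 1 ->
  (forall i, 1 <= i -> i < k -> t i < t i.+1) ->
  (forall i j, 1 <= i -> i < j -> j <= k -> param k t (t j - t i)) ->
  arithmetic k t.
Proof.
move=> t1 t_incr diffs.
have t_lt := t_lt t_incr; have t_le := t_le t_incr.
have diff_ge j e : 1 <= e < j -> j <= k -> t e <= t j - t (j - e).
  move=> + jk; elim: e => [//|e IH] ej.
  have := diffs (j - e.+1) j ltac:(lia) ltac:(lia) jk.
  case: (posnP e) => [-> /(param_ge t_incr) //|e0 /paramP [l lk tl]].
  have [tj tjS] : t (j - e.+1) < t (j - e) /\ t (j - e) < t j by split; apply: t_lt; lia.
  have el : e < l by apply: (t_lt_idx t_incr (i := e)); have := IH ltac:(lia); lia.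
  by have := t_le e.+1 l ltac:(lia) el ltac:(lia); lia.
have first_diff j : 2 <= j <= k -> t j - t 1 = t j.-1.
  move=> jk; have := diff_ge j j.-1 ltac:(lia) ltac:(lia).
  rewrite (_ : j - j.-1 = 1); last lia.
  have := param_le_pred t_incr (j := j) (diffs 1 j (leqnn _) ltac:(lia) ltac:(lia)).
  by have := t_lt 1 j ltac:(lia) ltac:(lia) ltac:(lia); lia.
elim=> [//|i IH] ik.
case: (posnP i) => [->|i0]; first by rewrite mul1n.
by have := first_diff i.+1 ltac:(lia); rewrite IH ?mulSn; lia.
Qed.

Section Cliques.
Variables (n k : nat) (t : nat -> nat).
Local Notation G := (toeplitz_adj n k t).

Lemma clique_adj (A : {set 'I_n}) x y :
  is_clique G A -> x \in A -> y \in A -> x != y -> G x y.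
Proof.
move=> /forall_inP cA xA yA; move/forall_inP: (cA x xA) => /(_ y yA).
exact/implyP.
Qed.

Lemma clique_sub_shifts (A : {set 'I_n}) v0 : is_clique G A -> v0 \in A ->
  (forall w, w \in A -> v0 <= w) ->
  A :\ v0 \subset [set insubd v0 (v0 + t l.+1) | l : 'I_k].
Proof.
move=> cA v0A v0_min; apply/subsetP => w /setD1P [wv0 wA].
have := clique_adj cA v0A wA; rewrite eq_sym wv0 toeplitz_adjE => /(_ isT) /andP [_].
move=> /existsP [l /eqP e]; apply/imsetP; exists l => //; apply: val_inj.
have := v0_min w wA; have := ltn_ord w; rewrite val_insubd /absdiff in e *.
by move=> wn vw; rewrite ifT /=; lia.
Qed.

Lemma clique_shifts_card (A : {set 'I_n}) : is_clique G A -> A != set0 ->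
  exists v0, [/\ v0 \in A, #|A| = #|A :\ v0|.+1 &
    A :\ v0 \subset [set insubd v0 (v0 + t l.+1) | l : 'I_k]].
Proof.
move=> cA /set0Pn [x0 x0A].
case: (arg_minnP (fun v : 'I_n => nat_of_ord v) x0A) => v0 v0A v0_min.
have {}v0A : v0 \in A by [].
exists v0; split=> //; first by rewrite (cardsD1 v0) v0A.
exact: clique_sub_shifts.
Qed.

Lemma clique_card_le (A : {set 'I_n}) : is_clique G A -> #|A| <= k.+1.
Proof.
move=> cA; case: (eqVneq A set0) => [->|A0]; first by rewrite cards0.
have [v0 [_ -> sub]] := clique_shifts_card cA A0; rewrite ltnS.
apply: leq_trans (subset_leq_card sub) _.
by apply: leq_trans (leq_imset_card _ _) _; rewrite card_ord.
Qed.

Lemma clique_card_arithmetic (A : {set 'I_n}) : 1 <= t 1 ->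
  (forall i, 1 <= i -> i < k -> t i < t i.+1) ->
  is_clique G A -> #|A| = k.+1 -> arithmetic k t.
Proof.
move=> t1 t_incr cA cardA.
have A0 : A != set0 by apply/eqP => A0; rewrite A0 cards0 in cardA.
have [v0 [v0A cardAv0 sub]] := clique_shifts_card cA A0.
have /eqP Av0 : A :\ v0 == [set insubd v0 (v0 + t l.+1) | l : 'I_k].
  rewrite eqEcard sub /=; apply: leq_trans (leq_imset_card _ _) _.
  by rewrite card_ord; move: cardA; rewrite cardAv0 => -[->].
have shift_in (l : 'I_k) : exists2 w, w \in A & nat_of_ord w = v0 + t l.+1.
  have : insubd v0 (v0 + t l.+1) \in A :\ v0 by rewrite Av0; apply/imsetP; exists l.
  case/setD1P => ne inA; exists (insubd v0 (v0 + t l.+1)) => //.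
  rewrite val_insubd ifT //; apply: contraNT ne; rewrite -leqNgt => nl.
  by apply/eqP/val_inj; rewrite val_insubd ifN // -leqNgt.
apply: (arithmetic_of_diffs t1 t_incr) => i j i1 ij jk.
have [hi hj] : i.-1 < k /\ j.-1 < k by lia.
have [wi wiA] := shift_in (Ordinal hi); rewrite /= prednK // => ei.
have [wj wjA] := shift_in (Ordinal hj); rewrite /= prednK; last lia; move=> ej.
have tij : t i < t j by apply: (t_lt t_incr); lia.
have ne : wi != wj by apply/eqP => /(congr1 (@nat_of_ord _)); lia.
have := clique_adj cA wiA wjA ne; rewrite toeplitz_adj_lt; last lia.
by rewrite ei ej subnDl.
Qed.

Lemma arithmetic_clique : 1 <= k -> 1 <= t 1 -> t k <= n - 1 -> arithmetic k t ->
  exists2 A : {set 'I_n}, is_clique G A & #|A| = k.+1.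
Proof.
move=> k1 t1 tkn t_arith.
have tk : t k = k * t 1 by apply: t_arith; lia.
have n0 : 0 < n by nia.
pose o : 'I_n := Ordinal n0.
pose g (i : 'I_k.+1) : 'I_n := insubd o (i * t 1).
have gE i : val (g i) = i * t 1.
  by rewrite val_insubd ifT //; have := ltn_ord i; nia.
have g_inj : injective g.
  by move=> i i' /(congr1 val); rewrite !gE => /eqP; rewrite eqn_pmul2r // => /eqP /val_inj.
exists (g @: 'I_k.+1); last by rewrite card_imset // card_ord.
apply/forall_inP => _ /imsetP [i _ ->]; apply/forall_inP => _ /imsetP [i' _ ->].
apply/implyP => ne.
wlog ii' : i i' ne / i < i'.
  move=> W; case: (ltngtP i i') => h; first exact: W.
    by rewrite toeplitz_sym W // eq_sym.
  by rewrite (val_inj h) eqxx in ne.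
have [lt ik] : i * t 1 < i' * t 1 /\ i' <= k by rewrite ltn_pmul2r //; have := ltn_ord i'; lia.
rewrite toeplitz_adj_lt ?gE // -mulnBl; apply/paramP; exists (i' - i); first lia.
by apply: t_arith; lia.
Qed.

End Cliques.

Lemma clique_number_arithmetic n k t : 1 <= k -> 1 <= t 1 -> t k <= n - 1 ->
  (forall i, 1 <= i -> i < k -> t i < t i.+1) ->
  arithmetic k t <-> clique_number (toeplitz_adj n k t) = k.+1.
Proof.
move=> k1 t1 tkn t_incr; split=> [t_arith|ck].
  apply/eqP; rewrite eqn_leq; apply/andP; split.
    by apply/bigmax_leqP => A /clique_card_le.
  have [A cA <-] := arithmetic_clique k1 t1 tkn t_arith.
  exact: leq_bigmax_cond.
have cliques0 : 0 < #|[pred A : {set 'I_n} | is_clique (toeplitz_adj n k t) A]|.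
  by apply/card_gt0P; exists set0; rewrite inE; apply/forall_inP => x; rewrite inE.
have [A cA cardA] := eq_bigmax_cond (fun A : {set 'I_n} => #|A|) cliques0.
by apply: (clique_card_arithmetic t1 t_incr cA); rewrite -cardA -ck.
Qed.

Theorem theorem3p3 (n k : nat) (t : nat -> nat) :
  2 <= k ->
  1 <= t 1 ->
  (forall i, 1 <= i -> i < k -> t i < t i.+1) ->
  t k <= n - 1 ->
  t k.-1 + t k <= n ->
  let G := toeplitz_adj n k t in
  (interval_graph G <-> chordal G) /\
  (chordal G <-> (forall i, 1 <= i <= k -> t i = i * t 1)) /\
  ((forall i, 1 <= i <= k -> t i = i * t 1) <-> clique_number G = k.+1).
Proof.
move=> k2 t1 t_incr tkn tk_sum G.
have int_chord : interval_graph G -> chordal G := @interval_graph_chordal _ G.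
have chord_arith : chordal G -> arithmetic k t := chordal_arithmetic k2 t1 t_incr tk_sum.
have arith_int : arithmetic k t -> interval_graph G := arithmetic_interval_graph n t1.
split; first by split=> [/int_chord | /chord_arith /arith_int].
split; first by split=> [/chord_arith | /arith_int /int_chord].
by apply: clique_number_arithmetic; rewrite // ltnW.
Qed.
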